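(* Let $p$ be a prime, $w\ge1$, $\mu\ge1$ an integer. Let $C\subseteq\mathbb{F}_{p^w}^n$ be a linear $[n,k]$ code with $0<k<n$, with parity-check matrix $H\in\mathbb{F}_{p^w}^{(n-k)\times n}$ (a generator matrix of $C^\perp$) having columns $\mathbf h_1^T,\dots,\mathbf h_n^T$, and let $d^\perp$ be the minimum distance of $C^\perp$. Let $[n]=I_1\sqcup I_2\sqcup I_3$ be a partition with $|I_1|=|I_2|=n-d^\perp+1$. Let $\boldsymbol\tau=(\tau^{(1)},\dots,\tau^{(n)})$, $\tau^{(j)}:\mathbb{F}_{p^w}\to\{0,1\}^\mu$. Then \[ SD(\boldsymbol\tau(C),\boldsymbol\tau(\mathcal U_n))\le\frac12\cdot2^{\mu(n-d^\perp+1)}\sum_{(\ell_j)_{j\in I_3}\in(\{0,1\}^\mu)^{I_3}}\ \max_{\boldsymbol\beta\in\mathbb{F}_{p^w}^{n-k}\setminus\{\mathbf 0\}}\ \prod_{j\in I_3}\left|\widehat{\mathbb 1_{\ell_j}}(\langle\boldsymbol\beta,\mathbf h_j\rangle)\right|. \]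
   Context: $\mathrm{Tr}$ is the trace $\mathbb{F}_{p^w}\to\mathbb{F}_p$ (values in $\{0,\dots,p-1\}$), $\omega_p=e^{2\pi\mathbf i/p}$, $\hat f(\alpha)=p^{-w}\sum_xf(x)\omega_p^{\mathrm{Tr}(\alpha x)}$. For $\ell_j\in\{0,1\}^\mu$, $\mathbb 1_{\ell_j}$ is the indicator of $(\tau^{(j)})^{-1}(\ell_j)$. For $S\subseteq\mathbb{F}_{p^w}^n$, $\boldsymbol\tau(S)$ is the distribution of $(\tau^{(j)}(x_j))_j$ with $\mathbf x$ uniform on $S$; $\mathcal U_n=\mathbb{F}_{p^w}^n$; $SD$ is statistical distance. An empty product equals $1$. *)

From HB Require Import structures.
From mathcomp Require Import all_boot all_order all_algebra all_field.
From mathcomp Require Import reals trigo complex.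
Set Implicit Arguments. Unset Strict Implicit. Unset Printing Implicit Defensive.
Import Order.TTheory GRing.Theory Num.Theory.
Local Open Scope ring_scope.

Section Defs.
Variable F : finFieldType.

(* absolute trace Tr : F_{p^w} -> F_p, as an element of F: sum_{i<w} x^(p^i) *)
Definition trF (p w : nat) (x : F) : F := \sum_(i < w) x ^+ (p ^ i).

(* Tr(x) as a natural number in {0,...,p-1}: the c < p with c%:R = Tr(x) *)
Definition trn (p w : nat) (x : F) : nat :=
  find (fun c : nat => (c%:R : F) == trF p w x) (iota 0 p).

Definition bv (mu : nat) := {ffun 'I_mu -> bool}.

Variable R : realType.

Definition omega (p : nat) : R[i] :=
  Complex (cos (2 * pi / p%:R)) (sin (2 * pi / p%:R)).

Definition fourier (p w : nat) (f : F -> R[i]) (a : F) : R[i] :=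
  ((p ^ w)%:R)^-1 * \sum_(x : F) f x * omega p ^+ trn p w (a * x).

Definition ind (mu : nat) (t : F -> bv mu) (l : bv mu) : F -> R[i] :=
  fun x => (t x == l)%:R.

Definition cabs (z : R[i]) : R := Normc.normc z.

Definition wt (n : nat) (v : 'rV[F]_n) : nat := #|[set j | v 0 j != 0]|.

(* minimum distance of the code generated by the rows of H (H of full row rank) *)
Definition dual_dist (m n : nat) (H : 'M[F]_(m, n)) : nat :=
  \big[minn/n]_(b : 'rV[F]_m | b != 0) wt (b *m H).

Definition code (m n : nat) (H : 'M[F]_(m, n)) : {set 'rV[F]_n} :=
  [set x : 'rV[F]_n | H *m x^T == 0].

Definition tau_img (n mu : nat) (tau : 'I_n -> F -> bv mu) (x : 'rV[F]_n)
  : {ffun 'I_n -> bv mu} := [ffun j => tau j (x 0 j)].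

Definition tau_distr (n mu : nat) (tau : 'I_n -> F -> bv mu) (S : {set 'rV[F]_n})
  (y : {ffun 'I_n -> bv mu}) : R :=
  #|[set x in S | tau_img tau x == y]|%:R / #|S|%:R.

End Defs.

Definition SD (R : realType) (T : finType) (P Q : T -> R) : R :=
  2^-1 * \sum_(y : T) `|P y - Q y|.

From HB Require Import structures.
From mathcomp Require Import all_boot all_order all_algebra all_field.
From mathcomp Require Import reals trigo complex.
From mathcomp Require Import zify ring lra.
Set Implicit Arguments. Unset Strict Implicit. Unset Printing Implicit Defensive.
Import Order.TTheory GRing.Theory Num.Theory.
Local Open Scope ring_scope.

(* Let q = p^w = #|F|, psi(x) = omega_p^(Tr x) the canonical additive character
   of F, and write f_j,l for the Fourier transform of the indicator of
   (tau_j)^-1(l).  The proof has four ingredients, developed in this order.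
   1. psi is a nontrivial homomorphism from (F, +) to the unit circle of C;
      hence the orthogonality relations  sum_b psi(b.v) = q^m [v = 0]  on F^m.
   2. Poisson summation: for the code C = ker H (H of full row rank) and every
      y in ({0,1}^mu)^n,
        P_C(y) - P_U(y) = sum_(b <> 0) prod_j f_(j, y_j)(<b, h_j>).
   3. Parseval:  sum_g sum_l |f_j,l(g)|^2 = 1  for every coordinate j; and when
      #|A| = n - d + 1 the map b |-> (<b, h_j>)_(j in A) is injective (a nonzero
      codeword of the dual code has at least d nonzero entries), so
        sum_(b <> 0) prod_(j in A) sum_l |f_j,l(<b,h_j>)|^2 <= 1.
   4. For each b <> 0 split prod_j over I3, I1, I2: the I3 part is at most the
      maximum over b, and xy <= (x^2 + y^2)/2 on the I1, I2 parts.  Summing over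
      y, the coordinates outside I3 and I1 (resp. I2) contribute 2^(mu #|I2|),
      and 3. bounds what remains. *)

Lemma sum_character_eq0 (R : numFieldType) (V : finZmodType) (chi : V -> R) (z : V) :
  (forall a b, chi (a + b) = chi a * chi b) -> chi z != 1 -> \sum_v chi v = 0.
Proof.
move=> chiD chiz.
have shift : \sum_v chi v = (\sum_v chi v) * chi z.
  rewrite [LHS](reindex_inj (addIr z)) mulr_suml.
  by apply: eq_bigr => v _; rewrite chiD.
have : (\sum_v chi v) * (1 - chi z) = 0 by rewrite mulrBr mulr1 -shift subrr.
by move/eqP; rewrite mulf_eq0 subr_eq0 [1 == _]eq_sym (negbTE chiz) orbF => /eqP.
Qed.

Lemma sumr_sub_le (R : numDomainType) (T : finType) (P : pred T) (G : T -> R) :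
  (forall a, 0 <= G a) -> \sum_(a | P a) G a <= \sum_a G a.
Proof.
move=> G0; rewrite [X in _ <= X](bigID P) /= lerDl.
by apply: sumr_ge0 => a _; apply: G0.
Qed.

Lemma prodr_nat_bool (R : comNzRingType) (I : finType) (P : pred I) (b : I -> bool) :
  \prod_(i | P i) ((b i)%:R : R) = ([forall (i | P i), b i])%:R.
Proof.
case: (boolP [forall (i | P i), b i]) => [/forall_inP allb|].
  by rewrite big1 // => i /allb ->.
rewrite negb_forall_in => /exists_inP [i Pi bi].
by rewrite (bigD1 i) //= (negbTE bi) mul0r.
Qed.

Lemma sum_row_prod (R : comNzRingType) (F : finType) (n : nat) (g : 'I_n -> F -> R) :
  \sum_(x : 'rV[F]_n) \prod_j g j (x 0 j) = \prod_j \sum_t g j t.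
Proof.
rewrite bigA_distr_bigA /= (reindex (fun f : {ffun 'I_n -> F} => \row_j f j)) /=.
  by apply: eq_bigr => f _; apply: eq_bigr => j _; rewrite mxE.
exists (fun x : 'rV[F]_n => [ffun j => x 0 j]) => [f _|x _].
  by apply/ffunP => j; rewrite ffunE mxE.
by apply/matrixP => i j; rewrite mxE ffunE ord1.
Qed.

Section Partition3.
Variables (R : comNzRingType) (T : finType) (n : nat) (S I J : {set 'I_n}).
Hypotheses (dSI : [disjoint S & I]) (dSJ : [disjoint S & J]) (dIJ : [disjoint I & J])
  (coverSIJ : S :|: I :|: J = [set: 'I_n]).

Lemma prod_partition3 (h : 'I_n -> R) :
  \prod_j h j = \prod_(j in S) h j * \prod_(j in I) h j * \prod_(j in J) h j.
Proof.
rewrite [LHS](bigID (mem S)) /= [X in _ * X = _](bigID (mem I)) /= mulrA.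
congr (_ * _ * _); apply: eq_bigl => j /=.
  by rewrite andbC; case: (boolP (j \in I)) => // /(disjointFl dSI) ->.
have : j \in S :|: I :|: J by rewrite coverSIJ inE.
rewrite !inE; case: (boolP (j \in S)) => [jS|] /=; first by rewrite (disjointFr dSJ jS).
by case: (boolP (j \in I)) => [jI|] //=; rewrite (disjointFr dIJ jI).
Qed.

Lemma notin_SI_of_J j : j \in J -> (j \notin S) && (j \notin I).
Proof. by move=> jJ; rewrite (disjointFl dSJ jJ) (disjointFl dIJ jJ). Qed.

Definition restrS (y : {ffun 'I_n -> T}) : {ffun {j | j \in S} -> T} :=
  [ffun s => y (val s)].

Lemma restrS_eqE y u : (restrS y == u) = [forall s, y (val s) == u s].
Proof.
apply/eqP/forallP => [<- s|e]; first by rewrite ffunE.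
by apply/ffunP => s; rewrite ffunE; apply/eqP.
Qed.

Lemma sum_fixed_restriction (u : {ffun {j | j \in S} -> T}) (g : 'I_n -> T -> R) :
  \sum_(y : {ffun 'I_n -> T}) (restrS y == u)%:R * \prod_(j in I) g j (y j) =
  (#|T| ^ #|J|)%N%:R * \prod_(j in I) \sum_t g j t.
Proof.
pose h j t : R := if insub j is Some s then (t == u s)%:R
                  else if j \in I then g j t else 1.
have hS (s : {j | j \in S}) : h (val s) = fun t => (t == u s)%:R by rewrite /h valK.
have hI j : j \in I -> h j = g j.
  by move=> jI; rewrite /h insubF ?(disjointFl dSI jI) // jI.
have hJ j : j \in J -> h j = fun=> 1.
  by move=> /notin_SI_of_J /andP [/negbTE jS /negbTE jI]; rewrite /h insubF // jI.
have split_y y : (restrS y == u)%:R * \prod_(j in I) g j (y j) = \prod_j h j (y j).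
  rewrite prod_partition3 [X in _ = _ * X]big1 ?mulr1 => [|j /hJ -> //].
  congr (_ * _); last by apply: eq_bigr => j /hI ->.
  rewrite restrS_eqE big_sub (eq_bigr (fun s => ((y (val s) == u s)%:R : R))) => [|s _].
    by rewrite prodr_nat_bool.
  by rewrite hS.
rewrite (eq_bigr _ (fun y _ => split_y y)) -(bigA_distr_bigA h) /= prod_partition3.
rewrite [X in X * _ * _]big1 ?mul1r => [|j jS]; last first.
  rewrite -[j]/(val (Sub j jS : {j | j \in S})) hS.
  by rewrite (bigD1 (u (Sub j jS))) //= eqxx big1 ?addr0 // => t /negbTE ->.
rewrite mulrC (eq_bigr _ (fun j jI => congr1 (fun f => \sum_t f t) (hI j jI))).
congr (_ * _); rewrite (eq_bigr (fun=> #|T|%:R)) => [|j /hJ ->]; last by rewrite sumr_const.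
by rewrite prodr_const natrX.
Qed.

Lemma sum_restrict_prod (Phi : {ffun {j | j \in S} -> T} -> R) (g : 'I_n -> T -> R) :
  \sum_(y : {ffun 'I_n -> T}) Phi (restrS y) * \prod_(j in I) g j (y j) =
  (#|T| ^ #|J|)%N%:R * (\sum_u Phi u) * \prod_(j in I) \sum_t g j t.
Proof.
have PhiE y : Phi (restrS y) = \sum_u Phi u * (restrS y == u)%:R.
  rewrite (bigD1 (restrS y)) //= eqxx mulr1 big1 ?addr0 // => u.
  by rewrite eq_sym => /negbTE ->; rewrite mulr0.
rewrite (eq_bigr (fun y => \sum_u Phi u * ((restrS y == u)%:R * \prod_(j in I) g j (y j))));
  last by move=> y _; rewrite PhiE mulr_suml; apply: eq_bigr => u _; rewrite mulrA.
rewrite exchange_big /= (eq_bigr (fun u => Phi u * ((#|T| ^ #|J|)%N%:R *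
    \prod_(j in I) \sum_t g j t))) => [|u _]; last by rewrite -mulr_sumr sum_fixed_restriction.
by rewrite -mulr_suml mulrA [(\sum_u Phi u) * _]mulrC.
Qed.
End Partition3.

Section TraceCharacter.
Variables (R : realType) (F : finFieldType) (p w : nat).
Hypotheses (p_prime : prime p) (charFp : p \in [pchar F]) (cardF : #|F| = (p ^ w)%N)
  (w_gt0 : (0 < w)%N).
Local Open Scope complex_scope.

Lemma frobeniusX_add (i : nat) (x y : F) : (x + y) ^+ (p ^ i) = x ^+ (p ^ i) + y ^+ (p ^ i).
Proof.
elim: i => [|i IH]; first by rewrite !expr1.
rewrite expnSr !exprM IH -!(pFrobenius_autE charFp).
by rewrite pFrobenius_autD_comm //; apply: mulrC.
Qed.

Lemma trF_add (x y : F) : trF p w (x + y) = trF p w x + trF p w y.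
Proof. by rewrite /trF -big_split /=; apply: eq_bigr => i _; rewrite frobeniusX_add. Qed.

(* The trace is fixed by the Frobenius x |-> x^p, since x^(p^w) = x. *)
Lemma trF_frobenius (x : F) : trF p w x ^+ p = trF p w x.
Proof.
rewrite /trF -(pFrobenius_autE charFp) (rmorph_sum (pFrobenius_aut charFp)) /=.
under eq_bigr => i _ do rewrite pFrobenius_autE -exprM -expnSr.
move: cardF; case: w w_gt0 => // w' _ cardF'.
rewrite big_ord_recr big_ord_recl /= -cardF' expf_card.
by rewrite expn0 expr1 addrC.
Qed.

Lemma natF_inj (a b : nat) : (a < p)%N -> (b < p)%N -> (a%:R : F) = b%:R -> a = b.
Proof.
wlog ab : a b / (a <= b)%N.
  move=> sym ha hb e; case: (leqP a b) => lt_ab; first exact: sym.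
  by apply/esym/sym => //; apply: ltnW.
move=> ha hb e; apply/eqP; rewrite eqn_leq ab /=.
have : (p %| b - a)%N by rewrite (dvdn_pcharf charFp) natrB // e subrr.
case: (posnP (b - a)) => [/eqP|ba_gt0]; first by rewrite subn_eq0.
by move/(dvdn_leq ba_gt0); move: hb; lia.
Qed.

(* The fixed points of the Frobenius are the p elements 0, 1, ..., p - 1:
   together with another root, X^p - X would have p + 1 roots. *)
Lemma frobenius_fixed_nat {y : F} : y ^+ p = y -> exists2 c, (c < p)%N & c%:R = y.
Proof.
move=> yp.
case: (boolP (y \in [seq (c%:R : F) | c <- iota 0 p])).
  by case/mapP => c; rewrite mem_iota add0n => hc ->; exists c.
move=> y_new; exfalso.
have sizeP : size ('X^p - 'X : {poly F}) = p.+1.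
  by rewrite size_polyDl ?size_polyXn // size_polyN size_polyX ltnS prime_gt1.
have P_neq0 : ('X^p - 'X : {poly F}) != 0 by rewrite -size_poly_eq0 sizeP.
have := max_poly_roots P_neq0 (rs := y :: [seq (c%:R : F) | c <- iota 0 p]).
rewrite /= y_new size_map size_iota sizeP ltnn => too_many; suff: false by [].
apply: too_many.
  rewrite /root !hornerE yp subrr eqxx /=; apply/allP => z /mapP [c _ ->].
  by rewrite /root !hornerE -(pFrobenius_autE charFp) rmorph_nat subrr.
rewrite map_inj_in_uniq ?iota_uniq // => a b; rewrite !mem_iota !add0n.
exact: natF_inj.
Qed.

Lemma trn_spec (x : F) : (trn p w x < p)%N /\ (trn p w x)%:R = trF p w x.
Proof.
have [c c_lt ce] := frobenius_fixed_nat (trF_frobenius x).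
set P := (fun c : nat => (c%:R : F) == trF p w x).
have hasP : has P (iota 0 p) by apply/hasP; exists c; rewrite ?mem_iota //; apply/eqP.
have := hasP; rewrite has_find size_iota => lt; split; first exact: lt.
by have := nth_find 0%N hasP; rewrite nth_iota // add0n => /eqP.
Qed.

Lemma trn_add (x y : F) : trn p w (x + y) = ((trn p w x + trn p w y) %% p)%N.
Proof.
have [lt1 e1] := trn_spec (x + y); have [lt2 e2] := trn_spec x.
have [lt3 e3] := trn_spec y.
apply: natF_inj => //; first by rewrite ltn_pmod // prime_gt0.
have natF_mod a : ((a %% p)%:R : F) = a%:R.
  by rewrite [in RHS](divn_eq a p) natrD natrM (pcharf0 charFp) mulr0 add0r.
by rewrite natF_mod natrD e1 e2 e3 trF_add.
Qed.

Lemma trn0 : trn p w (0 : F) = 0%N.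
Proof.
have [lt e] := trn_spec (0 : F); apply: natF_inj => //; first exact: prime_gt0.
by rewrite e /trF big1 // => i _; rewrite expr0n expn_eq0 eqn0Ngt prime_gt0.
Qed.

Lemma size_trace_poly (m : nat) : size (\sum_(i < m.+1) 'X^(p ^ i) : {poly F}) = (p ^ m).+1.
Proof.
elim: m => [|m IH]; first by rewrite big_ord1 expn0 size_polyXn.
rewrite big_ord_recr /= addrC size_polyDl ?size_polyXn // IH ltnS.
by rewrite ltn_exp2l ?prime_gt1.
Qed.

(* The trace is not identically zero: as a polynomial of degree p^(w-1) < #|F|
   it cannot vanish on all of F. *)
Lemma trF_nonzero : exists x : F, trF p w x != 0.
Proof.
apply/existsP; rewrite -negb_forall; apply/negP => /forallP tr_zero.
move: cardF tr_zero; case: w w_gt0 => // w' _ cardF' tr_zero.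
pose Q : {poly F} := \sum_(i < w'.+1) 'X^(p ^ i).
have sizeQ : size Q = (p ^ w').+1 by apply: size_trace_poly.
have Q_neq0 : Q != 0 by rewrite -size_poly_eq0 sizeQ.
have := max_poly_roots Q_neq0 (rs := enum F).
rewrite -cardE cardF' sizeQ ltnS leqNgt ltn_exp2l ?prime_gt1 // ltnSn /=.
move=> too_many; suff: false by []; apply: too_many; last exact: enum_uniq.
apply/allP => x _.
rewrite /root /Q horner_sum; under eq_bigr => i _ do rewrite hornerXn.
exact: (tr_zero x).
Qed.

Let theta : R := 2 * pi / p%:R.

Lemma p_neq0 : (p%:R : R) != 0.
Proof. by rewrite pnatr_eq0 -lt0n prime_gt0. Qed.

Lemma omegaX (t : nat) : omega R p ^+ t = Complex (cos (t%:R * theta)) (sin (t%:R * theta)).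
Proof.
elim: t => [|t IH]; first by rewrite expr0 mul0r cos0 sin0.
rewrite exprS IH /omega -/theta -[t.+1]addn1 natrD mulrDl mul1r cosD sinD.
by simpc; congr Complex; ring.
Qed.

Lemma omega_order : omega R p ^+ p = 1.
Proof.
rewrite omegaX.
have -> : p%:R * theta = pi *+ 2 by rewrite /theta mulr2n; field; exact: p_neq0.
by rewrite cos2pi sin2pi.
Qed.

(* omega_p is a primitive p-th root of unity: for 0 < t < p, the half angle
   t pi / p lies in (0, pi), so cos (2 t pi / p) = 1 - 2 sin^2 (t pi / p) < 1. *)
Lemma omegaX_neq1 (t : nat) : (0 < t)%N -> (t < p)%N -> omega R p ^+ t != 1.
Proof.
move=> t_gt0 t_lt; rewrite omegaX; apply/negP => /eqP [] cos1 _.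
have pR_gt0 : (0 : R) < p%:R by rewrite ltr0n prime_gt0.
have tR_gt0 : (0 : R) < t%:R by rewrite ltr0n.
set x := t%:R * theta in cos1.
have half_gt0 : 0 < x / 2 by rewrite /x /theta !mulr_gt0 ?invr_gt0 ?pi_gt0.
have half_lt : x / 2 < pi.
  have -> : x / 2 = pi * (t%:R / p%:R) by rewrite /x /theta; field; exact: p_neq0.
  by rewrite gtr_pMr ?pi_gt0 // ltr_pdivrMr // mul1r ltr_nat.
have sin_gt0 : 0 < sin (x / 2) by apply: sin_gt0_pi; rewrite half_gt0 half_lt.
have : cos x = cos ((x / 2) *+ 2) by rewrite mulr2n; congr cos; field.
rewrite cos_mulr2n cos1 cos2sin2 => e.
have : sin (x / 2) ^+ 2 = 0 by lra.
by move/eqP; rewrite expf_eq0 /= gt_eqF.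
Qed.

Definition psi (x : F) : R[i] := omega R p ^+ trn p w x.

Lemma psiD x y : psi (x + y) = psi x * psi y.
Proof.
rewrite /psi trn_add -exprD [in RHS](divn_eq (_ + _) p).
by rewrite exprD mulnC exprM omega_order expr1n mul1r.
Qed.

Lemma psi0 : psi 0 = 1.
Proof. by rewrite /psi trn0 expr0. Qed.

Lemma psi_sum (I : Type) (r : seq I) (P : pred I) (f : I -> F) :
  psi (\sum_(i <- r | P i) f i) = \prod_(i <- r | P i) psi (f i).
Proof. exact: (big_morph psi psiD psi0). Qed.

Lemma psi_nontrivial : exists z, psi z != 1.
Proof.
have [x tr_x] := trF_nonzero; have [lt e] := trn_spec x.
exists x; apply: omegaX_neq1 => //.
by rewrite lt0n; apply: contra tr_x => /eqP t0; rewrite -e t0.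
Qed.

Lemma norm_psi x : `|psi x| = 1.
Proof. by rewrite /psi normrX normc_def /= cos2Dsin2 sqrtr1 expr1n. Qed.

Lemma conj_psi x : (psi x)^*%C = psi (- x).
Proof.
have psi_neq0 : psi x != 0 by rewrite -normr_eq0 norm_psi oner_eq0.
by apply: (mulfI psi_neq0); rewrite -sqr_normc norm_psi expr1n -psiD subrr psi0.
Qed.

Lemma cardF_neq0 : (#|F|%:R : R[i]) != 0.
Proof. by rewrite pnatr_eq0 -lt0n; apply/card_gt0P; exists 0. Qed.

Lemma psi_orth (c : F) : \sum_(b : F) psi (b * c) = if c == 0 then #|F|%:R else 0.
Proof.
case: eqP => [->|/eqP c_neq0].
  by under eq_bigr => b _ do rewrite mulr0 psi0; rewrite sumr_const.
have [z psiz] := psi_nontrivial.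
apply: (@sum_character_eq0 _ _ (fun b => psi (b * c)) (z / c)).
  by move=> a b; rewrite mulrDl psiD.
by rewrite divfK.
Qed.

Lemma psi_orth_vec (m : nat) (v : 'cV[F]_m) :
  \sum_(b : 'rV[F]_m) psi ((b *m v) 0 0) = if v == 0 then (#|F| ^ m)%N%:R else 0.
Proof.
case: eqP => [->|/eqP v_neq0].
  under eq_bigr => b _ do rewrite mulmx0 mxE psi0.
  by rewrite sumr_const card_mx mul1n.
have [i vi] : exists i, v i 0 != 0.
  apply/existsP; apply: contraR v_neq0 => /existsPn v0; apply/eqP/matrixP => i j.
  by rewrite ord1 mxE; apply/eqP; move: (v0 i); rewrite negbK.
have [z psiz] := psi_nontrivial.
apply: (@sum_character_eq0 _ _ (fun b => psi ((b *m v) 0 0)) ((z / v i 0) *: 'e_i)).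
  by move=> a b; rewrite mulmxDl mxE psiD.
by rewrite -scalemxAl -rowE !mxE divfK.
Qed.

Section CodeImage.
Variables (n m mu : nat) (H : 'M[F]_(m, n)) (tau : 'I_n -> F -> bv mu).
Hypothesis H_free : row_free H.

Definition fcoef (j : 'I_n) (l : bv mu) (g : F) : R[i] := fourier p w (ind R (tau j) l) g.

Lemma fcoefE j l g : fcoef j l g = (#|F|%:R)^-1 * \sum_x (tau j x == l)%:R * psi (g * x).
Proof. by rewrite /fcoef /fourier cardF. Qed.

Lemma sum_twisted_fibre (y : {ffun 'I_n -> bv mu}) (g : 'rV[F]_n) :
  \sum_(x : 'rV[F]_n) \prod_j ((tau j (x 0 j) == y j)%:R * psi (g 0 j * x 0 j)) =
  (#|F| ^ n)%N%:R * \prod_j fcoef j (y j) (g 0 j).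
Proof.
rewrite (sum_row_prod (fun j t => (tau j t == y j)%:R * psi (g 0 j * t))).
have -> : (#|F| ^ n)%N%:R = \prod_(j < n) (#|F|%:R : R[i]) by rewrite prodr_const card_ord natrX.
rewrite -big_split /=; apply: eq_bigr => j _.
by rewrite fcoefE mulrA mulfV ?cardF_neq0 // mul1r.
Qed.

Lemma code_indicatorE (x : 'rV[F]_n) :
  ((H *m x^T == 0)%:R : R[i]) =
  ((#|F| ^ m)%N%:R)^-1 * \sum_(b : 'rV[F]_m) \prod_j psi ((b *m H) 0 j * x 0 j).
Proof.
have := psi_orth_vec (H *m x^T).
under eq_bigr => b _ do rewrite mulmxA mxE psi_sum.
under eq_bigr => b _ do under eq_bigr => j _ do rewrite [x^T _ _]mxE.
move=> ->; case: eqP => _; last by rewrite mulr0.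
by rewrite mulVf // natrX expf_neq0 // cardF_neq0.
Qed.

Lemma card_fibre (S : {set 'rV[F]_n}) (y : {ffun 'I_n -> bv mu}) :
  (#|[set x in S | tau_img tau x == y]|%:R : R[i]) =
  \sum_x (x \in S)%:R * \prod_j (tau j (x 0 j) == y j)%:R.
Proof.
rewrite -sumr_const big_mkcond /=; apply: eq_bigr => x _.
rewrite prodr_nat_bool inE.
have -> : (tau_img tau x == y) = [forall j, tau j (x 0 j) == y j].
  apply/eqP/forallP => [<- j|e]; first by rewrite ffunE.
  by apply/ffunP => j; rewrite ffunE; apply/eqP.
by case: (x \in S); case: [forall _, _]; rewrite ?mul1r ?mul0r.
Qed.

Lemma card_code_fibre (y : {ffun 'I_n -> bv mu}) :
  (#|[set x in code H | tau_img tau x == y]|%:R : R[i]) =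
  ((#|F| ^ m)%N%:R)^-1 * ((#|F| ^ n)%N%:R *
     \sum_(b : 'rV[F]_m) \prod_j fcoef j (y j) ((b *m H) 0 j)).
Proof.
rewrite card_fibre.
under eq_bigr => x _ do rewrite inE code_indicatorE -mulrA mulr_suml.
rewrite -mulr_sumr exchange_big /=; congr (_ * _); rewrite mulr_sumr.
apply: eq_bigr => b _; rewrite -sum_twisted_fibre; apply: eq_bigr => x _.
by rewrite -big_split /=; apply: eq_bigr => j _; rewrite mulrC.
Qed.

Lemma card_code : (#|code H|%:R : R[i]) = ((#|F| ^ m)%N%:R)^-1 * (#|F| ^ n)%N%:R.
Proof.
rewrite -sumr_const big_mkcond /=.
have code_nat x : (if x \in code H then 1 else 0 : R[i]) = (H *m x^T == 0)%:R.
  by rewrite inE; case: (_ == _).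
under eq_bigr => x _ do rewrite code_nat code_indicatorE.
rewrite -mulr_sumr exchange_big /=; congr (_ * _).
have orth_row (b : 'rV[F]_m) : \sum_(x : 'rV[F]_n) \prod_j psi ((b *m H) 0 j * x 0 j) =
    if (b *m H)^T == 0 then (#|F| ^ n)%N%:R else 0.
  rewrite -psi_orth_vec; apply: eq_bigr => x _.
  by rewrite mxE psi_sum; apply: eq_bigr => j _; rewrite [(_ *m H)^T _ _]mxE mulrC.
under eq_bigr => b _ do rewrite orth_row trmx_eq0 mulmx_free_eq0 //.
by rewrite (bigD1 0) //= eqxx big1 ?addr0 // => b /negbTE ->.
Qed.

Lemma code_distrE (y : {ffun 'I_n -> bv mu}) :
  (tau_distr R tau (code H) y)%:C = \sum_(b : 'rV[F]_m) \prod_j fcoef j (y j) ((b *m H) 0 j).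
Proof.
rewrite /tau_distr rmorphM fmorphV /= !rmorph_nat card_code_fibre card_code.
have qm_neq0 : ((#|F| ^ m)%N%:R : R[i]) != 0 by rewrite natrX expf_neq0 // cardF_neq0.
have qn_neq0 : ((#|F| ^ n)%N%:R : R[i]) != 0 by rewrite natrX expf_neq0 // cardF_neq0.
by field; rewrite qm_neq0 qn_neq0.
Qed.

Lemma uniform_distrE (y : {ffun 'I_n -> bv mu}) :
  (tau_distr R tau [set: 'rV[F]_n] y)%:C = \prod_j fcoef j (y j) 0.
Proof.
rewrite /tau_distr rmorphM fmorphV /= !rmorph_nat card_fibre cardsT card_mx mul1n.
have -> : \prod_j fcoef j (y j) 0 = \prod_j fcoef j (y j) ((0 : 'rV[F]_n) 0 j).
  by apply: eq_bigr => j _; rewrite mxE.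
rewrite -[X in _ = X](@mulKf _ ((#|F| ^ n)%N%:R)); last by rewrite natrX expf_neq0 // cardF_neq0.
rewrite -sum_twisted_fibre mulrC; congr (_ * _); apply: eq_bigr => x _.
by rewrite inE mul1r; apply: eq_bigr => j _; rewrite mxE mul0r psi0 mulr1.
Qed.

(* Poisson summation: the b = 0 term of the code expansion is the uniform
   distribution, so the difference is the sum over the nonzero b. *)
Lemma code_minus_uniform (y : {ffun 'I_n -> bv mu}) :
  (tau_distr R tau (code H) y - tau_distr R tau [set: 'rV[F]_n] y)%:C =
  \sum_(b : 'rV[F]_m | b != 0) \prod_j fcoef j (y j) ((b *m H) 0 j).
Proof.
rewrite rmorphB /= code_distrE uniform_distrE (bigD1 0) //=.
have -> : \prod_j fcoef j (y j) (((0 : 'rV[F]_m) *m H) 0 j) = \prod_j fcoef j (y j) 0.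
  by apply: eq_bigr => j _; rewrite mul0mx mxE.
by rewrite addrC addrK.
Qed.

Lemma normc_cabs (z : R[i]) : `|z| = (cabs z)%:C.
Proof. by case: z. Qed.

Lemma cabs_sqr (z : R[i]) : ((cabs z) ^+ 2)%:C = z * z^*%C.
Proof. by rewrite rmorphXn -sqr_normc normc_cabs. Qed.

Lemma parseval_indicator (f : F -> bool) :
  \sum_(g : F) ((#|F|%:R)^-1 * \sum_x (f x)%:R * psi (g * x)) *
               ((#|F|%:R)^-1 * \sum_x (f x)%:R * psi (g * x))^*%C =
  (#|F|%:R)^-1 * \sum_x ((f x)%:R : R[i]).
Proof.
set q := (#|F|%:R : R[i]).
have expand g : (q^-1 * \sum_x (f x)%:R * psi (g * x)) *
               (q^-1 * \sum_x (f x)%:R * psi (g * x))^*%C =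
   q^-1 * q^-1 * \sum_x \sum_x' ((f x)%:R * (f x')%:R) * psi (g * (x - x')).
  rewrite rmorphM /= conjc_inv conjc_nat rmorph_sum /=.
  under [X in _ * (_ * X)]eq_bigr => x _ do rewrite rmorphM /= conjc_nat conj_psi.
  rewrite mulrACA; congr (_ * _); rewrite mulr_suml; apply: eq_bigr => x _.
  by rewrite mulr_sumr; apply: eq_bigr => x' _; rewrite mulrACA -psiD mulrBr.
under eq_bigr => g _ do rewrite expand.
rewrite -mulr_sumr -mulrA; congr (_ * _); rewrite exchange_big /=.
under eq_bigr => x _ do rewrite exchange_big /=.
under eq_bigr => x _ do under eq_bigr => x' _ do rewrite -mulr_sumr psi_orth subr_eq0.
rewrite mulr_sumr; apply: eq_bigr => x _.
rewrite (bigD1 x) //= eqxx big1 ?addr0 => [|x']; last first.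
  by rewrite eq_sym => /negbTE ->; rewrite mulr0.
by case: (f x); rewrite ?mul1r ?mul0r ?mulr0 // mulVf // cardF_neq0.
Qed.

(* The fibres of tau_j partition F, so the spectral energies at coordinate j
   add up to 1. *)
Definition energy (j : 'I_n) (g : F) : R := \sum_(l : bv mu) cabs (fcoef j l g) ^+ 2.

Lemma energy_ge0 j g : 0 <= energy j g.
Proof. by apply: sumr_ge0 => l _; apply: sqr_ge0. Qed.

Lemma parseval (j : 'I_n) : \sum_(g : F) energy j g = 1.
Proof.
apply: complexI; rewrite rmorph_sum /= rmorph1.
under eq_bigr => g _ do rewrite rmorph_sum /=.
rewrite exchange_big /=.
under eq_bigr => l _ do under eq_bigr => g _ do rewrite cabs_sqr fcoefE.
under eq_bigr => l _ do rewrite (parseval_indicator (fun x => tau j x == l)).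
rewrite -mulr_sumr exchange_big /=.
have one_fibre x : \sum_(l : bv mu) ((tau j x == l)%:R : R[i]) = 1.
  rewrite (bigD1 (tau j x)) //= eqxx big1 ?addr0 // => l.
  by rewrite eq_sym => /negbTE ->.
under eq_bigr => x _ do rewrite one_fibre.
by rewrite sumr_const mulVf // cardF_neq0.
Qed.

Lemma dual_dist_le_wt (b : 'rV[F]_m) : b != 0 -> (dual_dist H <= wt (b *m H))%N.
Proof.
move=> b_neq0; rewrite /dual_dist.
have : b \in index_enum ('rV[F]_m) by rewrite mem_index_enum.
elim: (index_enum _) => [|x r IH] //.
rewrite inE big_cons => /orP [/eqP <-|/IH le_b]; first by rewrite b_neq0 geq_minl.
by case: (x != 0) => //; rewrite (leq_trans _ le_b) // geq_minr.
Qed.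

Definition restr_dual (A : {set 'I_n}) (b : 'rV[F]_m) : {ffun {j | j \in A} -> F} :=
  [ffun s => (b *m H) 0 (val s)].

(* On n - d + 1 coordinates a dual codeword is determined by its entries,
   since a nonzero dual codeword has at most n - d zero entries. *)
Lemma restr_dual_inj (A : {set 'I_n}) : #|A| = (n - dual_dist H + 1)%N ->
  injective (restr_dual A).
Proof.
move=> cardA b1 b2 e; apply/eqP; rewrite -subr_eq0; apply/negP => b12_neq0.
have zero_on_A j : j \in A -> ((b1 - b2) *m H) 0 j = 0.
  move=> jA; move/ffunP: e => /(_ (exist _ j jA)); rewrite !ffunE /= => e.
  move: e; rewrite mulmxBl; move: (b1 *m H) (b2 *m H) => u v e.
  by rewrite !mxE e subrr.
have wt_ge : (dual_dist H <= wt ((b1 - b2) *m H))%N by apply: dual_dist_le_wt; apply/negP.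
have wt_le : (wt ((b1 - b2) *m H) <= #|~: A|)%N.
  apply: subset_leq_card; apply/subsetP => j; rewrite !inE; apply: contra => jA.
  by rewrite zero_on_A.
have cardAC := cardsC A; rewrite card_ord in cardAC.
have cardA_le := max_card (mem A); rewrite card_ord in cardA_le.
by move: wt_ge wt_le cardAC cardA_le; rewrite cardA; lia.
Qed.

(* Parseval and injectivity: the energies on n - d + 1 coordinates, summed
   over the nonzero dual codewords, total at most 1. *)
Lemma sum_energy_le1 (A : {set 'I_n}) : #|A| = (n - dual_dist H + 1)%N ->
  \sum_(b : 'rV[F]_m | b != 0) \prod_(j in A) energy j ((b *m H) 0 j) <= 1.
Proof.
move=> cardA.
pose G (a : {ffun {j | j \in A} -> F}) := \prod_s energy (val s) (a s).
have G_ge0 a : 0 <= G a by apply: prodr_ge0 => s _; apply: energy_ge0.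
have GE b : \prod_(j in A) energy j ((b *m H) 0 j) = G (restr_dual A b).
  by rewrite big_sub; apply: eq_bigr => s _; rewrite ffunE.
under eq_bigr => b _ do rewrite GE.
apply: (@le_trans _ _ (\sum_b G (restr_dual A b))); first exact: sumr_sub_le.
rewrite -(big_imset G (in2W (restr_dual_inj cardA))) /=.
apply: (@le_trans _ _ (\sum_a G a)); first exact: sumr_sub_le.
have -> : \sum_a G a = \prod_(s : {j | j \in A}) \sum_(g : F) energy (val s) g.
  by rewrite /G bigA_distr_bigA.
by rewrite big1 // => s _; apply: parseval.
Qed.

Definition fabs (b : 'rV[F]_m) (j : 'I_n) (l : bv mu) : R := cabs (fcoef j l ((b *m H) 0 j)).

Lemma fabs_ge0 b j l : 0 <= fabs b j l.
Proof. by rewrite -lecR -normc_cabs normr_ge0. Qed.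

Lemma normc_real (r : R) : `|r%:C| = `|r|%:C.
Proof. by rewrite normc_def /= expr0n /= addr0 sqrtr_sqr. Qed.

Lemma distr_diff_le (y : {ffun 'I_n -> bv mu}) :
  `|tau_distr R tau (code H) y - tau_distr R tau [set: 'rV[F]_n] y| <=
  \sum_(b : 'rV[F]_m | b != 0) \prod_j fabs b j (y j).
Proof.
rewrite -lecR -normc_real code_minus_uniform rmorph_sum /=.
apply: (le_trans (ler_norm_sum _ _ _)); apply: ler_sum => b _.
by rewrite normr_prod rmorph_prod (eq_bigr _ (fun j _ => normc_cabs _)).
Qed.

Section ThreeBlocks.
Variables (I1 I2 I3 : {set 'I_n}).
Hypotheses (d12 : [disjoint I1 & I2]) (d13 : [disjoint I1 & I3]) (d23 : [disjoint I2 & I3])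
  (cover : I1 :|: I2 :|: I3 = [set: 'I_n])
  (cardI1 : #|I1| = (n - dual_dist H + 1)%N) (cardI2 : #|I2| = (n - dual_dist H + 1)%N).

Let d31 : [disjoint I3 & I1]. Proof. by rewrite disjoint_sym. Qed.
Let d32 : [disjoint I3 & I2]. Proof. by rewrite disjoint_sym. Qed.
Let d21 : [disjoint I2 & I1]. Proof. by rewrite disjoint_sym. Qed.
Let cover312 : I3 :|: I1 :|: I2 = [set: 'I_n]. Proof. by rewrite -setUA setUC. Qed.
Let cover321 : I3 :|: I2 :|: I1 = [set: 'I_n].
Proof. by rewrite -setUA setUC [I2 :|: I1]setUC. Qed.

Definition max_I3 (l : {ffun {j | j \in I3} -> bv mu}) : R :=
  \big[Num.max/0]_(b : 'rV[F]_m | b != 0) \prod_(s : {j | j \in I3}) fabs b (val s) (l s).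

Lemma max_I3_ge0 l : 0 <= max_I3 l.
Proof.
rewrite /max_I3; elim/big_ind: _ => // [x y x_ge0 y_ge0|b _]; first by rewrite le_max x_ge0.
by apply: prodr_ge0 => s _; apply: fabs_ge0.
Qed.

Lemma term_le_max_amgm (b : 'rV[F]_m) (y : {ffun 'I_n -> bv mu}) : b != 0 ->
  \prod_j fabs b j (y j) <= max_I3 (restrS I3 y) *
    ((\prod_(j in I1) fabs b j (y j) ^+ 2 + \prod_(j in I2) fabs b j (y j) ^+ 2) / 2).
Proof.
move=> b_neq0; rewrite (prod_partition3 d31 d32 d12 cover312) -mulrA.
apply: ler_pM.
- by apply: prodr_ge0 => j _; apply: fabs_ge0.
- by apply: mulr_ge0; apply: prodr_ge0 => j _; apply: fabs_ge0.
- rewrite big_sub /max_I3.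
  have := @le_bigmax_cond _ _ _ 0 b (fun b => b != 0)
    (fun b => \prod_(s : {j | j \in I3}) fabs b (val s) (restrS I3 y s)) b_neq0.
  by under eq_bigr => s _ do rewrite ffunE.
- rewrite !prodrXl.
  set x1 := \prod_(j in I1) _; set x2 := \prod_(j in I2) _.
  by have := sqr_ge0 (x1 - x2); rewrite sqrrB; lra.
Qed.

Lemma sum_max_energy (A J : {set 'I_n}) :
  [disjoint I3 & A] -> [disjoint I3 & J] -> [disjoint A & J] ->
  I3 :|: A :|: J = [set: 'I_n] -> #|J| = (n - dual_dist H + 1)%N ->
  forall b : 'rV[F]_m,
  \sum_(y : {ffun 'I_n -> bv mu}) max_I3 (restrS I3 y) * \prod_(j in A) fabs b j (y j) ^+ 2 =
  2 ^+ (mu * (n - dual_dist H + 1)) * (\sum_l max_I3 l) * \prod_(j in A) energy j ((b *m H) 0 j).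
Proof.
move=> d3A d3J dAJ cover3AJ cardJ b.
rewrite (sum_restrict_prod d3A d3J dAJ cover3AJ max_I3 (fun j t => fabs b j t ^+ 2)).
by rewrite card_ffun card_bool card_ord cardJ -expnM natrX.
Qed.

Lemma SD_le_sum_max :
  SD (tau_distr R tau (code H)) (tau_distr R tau [set: 'rV[F]_n]) <=
  2^-1 * 2 ^+ (mu * (n - dual_dist H + 1)) * \sum_l max_I3 l.
Proof.
set N := (2 : R) ^+ _; set M := \sum_l max_I3 l.
have NM_ge0 : 0 <= N * M by rewrite mulr_ge0 ?exprn_ge0 ?sumr_ge0 // => l _; apply: max_I3_ge0.
pose E (A : {set 'I_n}) (b : 'rV[F]_m) := \prod_(j in A) energy j ((b *m H) 0 j).
pose amgm b (y : {ffun 'I_n -> bv mu}) := max_I3 (restrS I3 y) *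
  ((\prod_(j in I1) fabs b j (y j) ^+ 2 + \prod_(j in I2) fabs b j (y j) ^+ 2) / 2).
have sum_amgm b : \sum_y amgm b y = N * M / 2 * (E I1 b + E I2 b).
  have e1 := sum_max_energy d31 d32 d12 cover312 cardI2 b.
  have e2 := sum_max_energy d32 d31 d21 cover321 cardI1 b.
  rewrite (eq_bigr (fun y => (max_I3 (restrS I3 y) * \prod_(j in I1) fabs b j (y j) ^+ 2 +
      max_I3 (restrS I3 y) * \prod_(j in I2) fabs b j (y j) ^+ 2) / 2)) => [|y _].
    by rewrite -mulr_suml big_split /= e1 e2 -/N -/M /E; ring.
  by rewrite /amgm mulrA mulrDr.
rewrite /SD -mulrA ler_pM2l ?invr_gt0 ?ltr0n //.
apply: (@le_trans _ _ (\sum_y \sum_(b : 'rV[F]_m | b != 0) amgm b y)).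
  apply: ler_sum => y _; apply: (le_trans (distr_diff_le y)).
  by apply: ler_sum => b b_neq0; apply: term_le_max_amgm.
rewrite exchange_big /= (eq_bigr _ (fun b _ => sum_amgm b)) -mulr_sumr big_split /=.
have := sum_energy_le1 cardI1; have := sum_energy_le1 cardI2.
rewrite -/(E I1) -/(E I2); move: (\sum_(b | _) E I1 b) (\sum_(b | _) E I2 b) => e1 e2.
by move=> e2_le1 e1_le1; rewrite -mulrA ler_piMr //; lra.
Qed.
End ThreeBlocks.
End CodeImage.
End TraceCharacter.

Theorem lemma4p6 (R : realType) (F : finFieldType) (p w mu n k : nat) :
  prime p -> p \in [pchar F] -> #|F| = (p ^ w)%N -> (0 < w)%N -> (0 < mu)%N ->
  (0 < k)%N -> (k < n)%N ->
  forall H : 'M[F]_(n - k, n), \rank H = (n - k)%N ->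
  forall I1 I2 I3 : {set 'I_n},
  [disjoint I1 & I2] -> [disjoint I1 & I3] -> [disjoint I2 & I3] ->
  I1 :|: I2 :|: I3 = [set: 'I_n] ->
  #|I1| = (n - dual_dist H + 1)%N -> #|I2| = (n - dual_dist H + 1)%N ->
  forall tau : 'I_n -> F -> bv mu,
  SD (tau_distr R tau (code H)) (tau_distr R tau [set: 'rV[F]_n]) <=
  2^-1 * 2 ^+ (mu * (n - dual_dist H + 1)) *
  \sum_(l : {ffun {j : 'I_n | j \in I3} -> bv mu})
    \big[Num.max/0]_(b : 'rV[F]_(n - k) | b != 0)
      \prod_(j : {j : 'I_n | j \in I3})
        cabs (fourier p w (ind R (tau (val j)) (l j)) ((b *m H) 0 (val j))).
Proof.
move=> p_prime charFp cardF w_gt0 _ _ _ H rankH I1 I2 I3 d12 d13 d23 cover cardI1 cardI2 tau.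
have H_free : row_free H by rewrite /row_free rankH.
exact: (SD_le_sum_max R p_prime charFp cardF w_gt0 tau H_free d12 d13 d23 cover cardI1 cardI2).
Qed.
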